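(* Let $\Gamma$ be a connected imprimitive strongly regular graph. Then $E(\Gamma)=E(\bar\Gamma)$ if and only if $\Gamma\cong K_{m\times m}$ for some integer $m>1$. In this case $E(K_{m\times m})=2(m-1)m$, and hence $4\mid E(K_{m\times m})$.
   Context: A strongly regular graph with parameters $(n,k,e,d)$ is a $k$-regular simple graph on $n$ vertices, neither complete nor edgeless, in which every two adjacent vertices have exactly $e$ common neighbours and every two distinct non-adjacent vertices have exactly $d$ common neighbours. It is primitive if both it and its complement are connected, and imprimitive otherwise. $K_{a\times m}$ denotes the complete multipartite graph with $a$ parts each of size $m$. The energy $E(\Gamma)$ is the sum of the absolute values of the adjacency eigenvalues (with multiplicity); $\bar\Gamma$ is the complement. *)

From HB Require Import structures.
From mathcomp Require Import all_boot all_order all_algebra all_field.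
Set Implicit Arguments. Unset Strict Implicit. Unset Printing Implicit Defensive.
Import Order.TTheory GRing.Theory Num.Theory.
Local Open Scope ring_scope.

Definition simple_graph (T : finType) (e : rel T) : Prop :=
  symmetric e /\ irreflexive e.

Definition compl_graph (T : finType) (e : rel T) : rel T :=
  [rel x y | (x != y) && ~~ e x y].

Definition common_nbrs (T : finType) (e : rel T) (x y : T) : nat :=
  #|[set z | e x z && e y z]|.

Definition srg_params (T : finType) (e : rel T) (k l mu : nat) : Prop :=
  [/\ forall x, #|[set y | e x y]| = k,
      exists x y, (x != y) && ~~ e x y,
      exists x y, e x y,
      forall x y, e x y -> common_nbrs e x y = l
    & forall x y, x != y -> ~~ e x y -> common_nbrs e x y = mu].

Definition strongly_regular (T : finType) (e : rel T) : Prop :=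
  simple_graph e /\ exists k l mu, srg_params e k l mu.

Definition connected_graph (T : finType) (e : rel T) : Prop :=
  forall x y : T, connect e x y.

Definition primitive_graph (T : finType) (e : rel T) : Prop :=
  connected_graph e /\ connected_graph (compl_graph e).

Definition imprimitive_graph (T : finType) (e : rel T) : Prop :=
  ~ primitive_graph e.

Definition adj_mx (T : finType) (e : rel T) : 'M[algC]_#|T| :=
  \matrix_(i, j) (e (enum_val i) (enum_val j))%:R.

(* The eigenvalues, with multiplicity: the roots of the characteristic polynomial. *)
Definition eigenvalues (T : finType) (e : rel T) : seq algC :=
  sval (closed_field_poly_normal (char_poly (adj_mx e))).

Definition energy (T : finType) (e : rel T) : algC :=
  \sum_(z <- eigenvalues e) `|z|.

(* complete multipartite graph K_{a x m}: vertices (part, index) *)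
Definition Kmulti (a m : nat) : rel ('I_a * 'I_m) :=
  [rel x y | x.1 != y.1].

Definition graph_iso (T T' : finType) (e : rel T) (e' : rel T') : Prop :=
  exists f : T -> T', bijective f /\ forall x y, e x y = e' (f x) (f y).
Arguments Kmulti a m : clear implicits.

(* If the graph is connected but imprimitive, its complement is disconnected, so some
   edge uv has every vertex adjacent to u or to v.  As |N(x) :|: N(z)| = 2k - lambda is
   the same for every edge xz, every edge has this property: non-adjacency is transitive
   and the graph is complete multipartite, with parts of size m = n - k.  Then
   A^2 = kJ - mA, so the spectrum of A lies in {k, -m, 0} and that of the complement
   J - I - A in {m - 1, -1}.  On each of these sets |z| agrees with a quadratic polynomial
   in z, so the energies are determined by traces: E = 2k and m E' = 2n(m - 1).  They
   agree iff k = m^2 - m, i.e. n = m^2, i.e. the graph is K_{m x m}. *)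

From HB Require Import structures.
From mathcomp Require Import all_boot all_order all_algebra all_field.
From mathcomp Require Import zify ring.
Set Implicit Arguments. Unset Strict Implicit. Unset Printing Implicit Defensive.
Import Order.TTheory GRing.Theory Num.Theory.
Local Open Scope ring_scope.

Section DiagonalConjugate.

Variables (R : idomainType) (n : nat) (P : 'M[R]_n) (d : 'rV[R]_n).
Hypothesis P_unit : P \in unitmx.

Let sim (X : 'M[R]_n) := invmx P *m X *m P.

Let sim_mul X Y : sim (X * Y) = sim X * sim Y.
Proof. by rewrite /sim -!mulmxE !mulmxA (mulmxK P_unit). Qed.

Let sim1 : sim 1 = 1.
Proof. by rewrite /sim mulmx1 mulVmx. Qed.

Let mxtrace_sim X : \tr (sim X) = \tr X.
Proof. by rewrite /sim mxtrace_mulC mulmxA mulmxV ?mul1mx. Qed.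

Let prod_sim_diag (I : Type) (rs : seq I) (F : I -> 'rV[R]_n) :
  \prod_(r <- rs) sim (diag_mx (F r)) = sim (diag_mx (\row_j \prod_(r <- rs) F r 0 j)).
Proof.
elim: rs => [|r rs IH].
  rewrite big_nil -sim1; congr sim; apply/matrixP => i j.
  by rewrite !mxE big_nil.
rewrite big_cons IH -sim_mul -mulmxE mulmx_diag; congr (sim (diag_mx _)).
by apply/rowP => j; rewrite !mxE big_cons.
Qed.

Lemma mxtrace_diag_conj_expn k :
  \tr ((invmx P *m diag_mx d *m P) ^+ k) = \sum_i d 0 i ^+ k.
Proof.
rewrite -(subn0 k) -prodr_const_nat prod_sim_diag mxtrace_sim mxtrace_diag.
by apply: eq_bigr => i _; rewrite mxE prodr_const_nat.
Qed.

Lemma diag_conj_root_mem (rs : seq R) :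
  \prod_(r <- rs) (invmx P *m diag_mx d *m P - r%:M) = 0 -> forall i, d 0 i \in rs.
Proof.
have shift r : invmx P *m diag_mx d *m P - r%:M = sim (diag_mx (\row_j (d 0 j - r))).
  rewrite /sim (_ : \row_j (d 0 j - r) = d - const_mx r); last first.
    by apply/rowP => j; rewrite !mxE.
  rewrite raddfB /= diag_const_mx mulmxBr mulmxBl mul_mx_scalar -scalemxAl.
  by rewrite mulVmx // scalemx1.
move=> + i; under eq_bigr do rewrite shift.
rewrite prod_sim_diag => /(congr1 (fun X => P *m X *m invmx P)).
rewrite /sim mulmx0 mul0mx !mulmxA mulmxV // mul1mx (mulmxK P_unit) => /matrixP/(_ i i).
rewrite !mxE eqxx mulr1n => /eqP; rewrite prodf_seq_eq0 => /hasP [r rs_r].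
by rewrite mxE subr_eq0 => /eqP ->.
Qed.

End DiagonalConjugate.

Lemma char_poly_invmx_conj (R : comUnitRingType) n (P A : 'M[R]_n) :
  P \in unitmx -> char_poly (invmx P *m A *m P) = char_poly A.
Proof.
move=> P_unit; rewrite /char_poly /char_poly_mx.
have -> : 'X%:M - map_mx polyC (invmx P *m A *m P) =
    map_mx polyC (invmx P) *m ('X%:M - map_mx polyC A) *m map_mx polyC P.
  rewrite !map_mxM mulmxBr mulmxBl; congr (_ - _).
  by rewrite scalar_mxC -mulmxA -map_mxM mulVmx // map_mx1 mulmx1.
by rewrite !det_mulmx mulrC mulrA -det_mulmx -map_mxM mulmxV // map_mx1 det1 mul1r.
Qed.

Lemma normalmx_char_poly_roots (C : numClosedFieldType) n (A : 'M[C]_n) (s : seq C) :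
  A \is normalmx -> char_poly A = \prod_(z <- s) ('X - z%:P) ->
  perm_eq s [seq spectral_diag A 0 i | i <- enum 'I_n].
Proof.
move=> /orthomx_spectralP A_sim s_roots; apply: prod_XsubC_eq.
rewrite -s_roots {1}A_sim char_poly_invmx_conj ?spectral_unit //.
rewrite char_poly_trig ?diag_mx_is_trig //.
by rewrite big_map big_enum /=; apply: eq_bigr => i _; rewrite mxE eqxx mulr1n.
Qed.

Lemma adj_mx_normal (T : finType) (e : rel T) : symmetric e -> adj_mx e \is normalmx.
Proof.
move=> e_sym; apply/normalmxP; suff -> : map_mx Num.conj (adj_mx e)^T = adj_mx e by [].
by apply/matrixP => i j; rewrite !mxE conjC_nat e_sym.
Qed.

Lemma energy_spectral_diag (T : finType) (e : rel T) : symmetric e ->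
  energy e = \sum_i `|spectral_diag (adj_mx e) 0 i|.
Proof.
move=> e_sym; rewrite /energy /eigenvalues; case: closed_field_poly_normal => s /=.
rewrite (monicP (char_poly_monic _)) scale1r => s_roots.
rewrite (perm_big _ (normalmx_char_poly_roots (adj_mx_normal e_sym) s_roots)) /=.
by rewrite big_map big_enum.
Qed.

Lemma energy_trace_identity (T : finType) (e : rel T) (rs : seq algC) (c a0 a1 a2 : algC) :
  symmetric e -> \prod_(r <- rs) (adj_mx e - r%:M) = 0 ->
  {in rs, forall z, c * `|z| = a0 + a1 * z + a2 * z ^+ 2} ->
  c * energy e = a0 * #|T|%:R + a1 * \tr (adj_mx e) + a2 * \tr (adj_mx e ^+ 2).
Proof.
move=> e_sym; rewrite (energy_spectral_diag e_sym).
have /orthomx_spectralP := adj_mx_normal e_sym.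
set P := spectralmx _; set d := spectral_diag _ => -> rs_root abs_eq.
have P_unit : P \in unitmx by apply: spectral_unit.
have d_rs := diag_conj_root_mem P_unit rs_root.
have := mxtrace_diag_conj_expn d P_unit 1; rewrite expr1 => ->.
rewrite mxtrace_diag_conj_expn // mulr_sumr.
under eq_bigr do rewrite abs_eq ?d_rs //.
rewrite !big_split /= -!mulr_sumr sumr_const card_ord mulr_natr.
by under [in RHS]eq_bigr do rewrite expr1.
Qed.

(* In a simple graph this makes non-adjacency an equivalence relation; its classes are
   the parts. *)
Definition complete_multipartite (T : finType) (e : rel T) : Prop :=
  forall x y z, ~~ e x y -> ~~ e y z -> ~~ e x z.

Lemma sum_enum_val_indicator (R : pzSemiRingType) (T : finType) (P : pred T) :
  \sum_(i < #|T|) (P (enum_val i))%:R = #|[set x | P x]|%:R :> R.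
Proof.
rewrite -(big_enum_val (A := T) (fun x => (P x)%:R)) /= -sum1_card natr_sum.
rewrite [RHS]big_mkcond /=.
by apply: eq_bigr => x _; rewrite inE; case: (P x).
Qed.

Lemma mxtrace_adj_mx (T : finType) (e : rel T) : irreflexive e -> \tr (adj_mx e) = 0.
Proof. by move=> e_irr; rewrite /mxtrace big1 // => i _; rewrite mxE e_irr. Qed.

Lemma adj_mx_compl (T : finType) (e : rel T) : irreflexive e ->
  adj_mx (compl_graph e) = const_mx 1 - 1%:M - adj_mx e.
Proof.
move=> e_irr; apply/matrixP => i j; rewrite !mxE /compl_graph /= (inj_eq enum_val_inj).
case: eqP => [->|_] /=; first by rewrite e_irr subrr subr0.
by case: (e _ _); rewrite ?subr0 ?subrr.
Qed.

Lemma compl_graph_sym (T : finType) (e : rel T) :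
  symmetric e -> symmetric (compl_graph e).
Proof. by move=> e_sym x y; rewrite /compl_graph /= eq_sym e_sym. Qed.

Lemma compl_graph_irr (T : finType) (e : rel T) : irreflexive (compl_graph e).
Proof. by move=> x; rewrite /compl_graph /= eqxx. Qed.

Lemma mxtrace_const_mx1 (R : pzSemiRingType) n : \tr (const_mx 1 : 'M[R]_n) = n%:R.
Proof. by rewrite /mxtrace; under eq_bigr do rewrite mxE; rewrite sumr_const card_ord. Qed.

Lemma const_mx1_sqr (R : pzSemiRingType) n :
  (const_mx 1 : 'M[R]_n) *m (const_mx 1 : 'M_n) = n%:R *: const_mx 1.
Proof.
apply/matrixP => i j; rewrite !mxE; under eq_bigr do rewrite !mxE mulr1.
by rewrite sumr_const card_ord mulr1.
Qed.

Lemma card_nonadj (T : finType) (e : rel T) k x :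
  #|[set y | e x y]| = k -> #|[set y | ~~ e x y]| = (#|T| - k)%N.
Proof.
move=> <-; rewrite cardsCs; congr (_ - _)%N.
by apply: eq_card => y; rewrite !inE negbK.
Qed.

Section CompleteMultipartite.

Variables (T : finType) (e : rel T) (k : nat).
Hypotheses (e_sym : symmetric e) (e_irr : irreflexive e).
Hypotheses (e_mp : complete_multipartite e) (e_reg : forall x, #|[set y | e x y]| = k).

Local Notation A := (adj_mx e).
Local Notation J := (const_mx 1 : 'M[algC]_#|T|).

Lemma card_common_nbrs_multipartite x y :
  (#|[set z | e x z && e z y]| + e x y * (#|T| - k) = k)%N.
Proof.
have nonadj_y : [set z | e x z && ~~ e z y] = if e x y then [set z | ~~ e y z] else set0.
  apply/setP => z; case exy: (e x y); rewrite !inE (e_sym z y).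
    rewrite andb_idl // => nyz; apply/negPn/negP => nxz.
    by move: nyz; rewrite e_sym => /(e_mp nxz); rewrite exy.
  by apply/negP => /andP [exz nyz]; move: (e_mp (negbT exy) nyz); rewrite exz.
rewrite -[in RHS](e_reg x) -(cardsID [set z | e z y] [set z | e x z]).
congr (_ + _)%N; first by apply: eq_card => z; rewrite !inE.
have -> : [set z | e x z] :\: [set z | e z y] = [set z | e x z && ~~ e z y].
  by apply/setP => z; rewrite !inE andbC.
by rewrite nonadj_y; case: (e x y); rewrite ?cards0 ?(card_nonadj (e_reg y)) ?mul1n.
Qed.

Lemma adj_mx_mul_const_mx1 : A *m J = k%:R *: J.
Proof.
apply/matrixP => i j; rewrite !mxE; under eq_bigr do rewrite !mxE mulr1.
by rewrite sum_enum_val_indicator mulr1 e_reg.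
Qed.

Lemma const_mx1_mul_adj_mx : J *m A = k%:R *: J.
Proof.
apply/matrixP => i j; rewrite !mxE; under eq_bigr do rewrite !mxE mul1r e_sym.
by rewrite sum_enum_val_indicator mulr1 e_reg.
Qed.

Lemma adj_mx_sqr : A *m A = k%:R *: J - (#|T| - k)%:R *: A.
Proof.
apply/matrixP => i j; rewrite !mxE; under eq_bigr do rewrite !mxE -natrM mulnb.
rewrite (@sum_enum_val_indicator _ _ (fun z => e (enum_val i) z && e z (enum_val j))) mulr1.
have := card_common_nbrs_multipartite (enum_val i) (enum_val j).
move/(congr1 (fun n => n%:R : algC)).
by rewrite natrD natrM => <-; rewrite [X in _ + X - _]mulrC addrK.
Qed.

Local Notation m := (#|T| - k)%N.

Lemma adj_mx_cubic_eq0 : \prod_(r <- [:: k%:R; - m%:R; 0]) (A - r%:M) = 0.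
Proof.
rewrite !big_cons big_nil mulr1 raddf0 subr0 raddfN opprK -!mulmxE.
have -> : (A + m%:R%:M) *m A = k%:R *: J.
  by rewrite mulmxDl adj_mx_sqr mul_scalar_mx subrK.
by rewrite mulmxBl -!scalemxAr adj_mx_mul_const_mx1 mul_scalar_mx subrr.
Qed.

Lemma compl_adj_mx_quadratic_eq0 : (k <= #|T|)%N ->
  \prod_(r <- [:: m%:R - 1; -1]) (adj_mx (compl_graph e) - r%:M) = 0.
Proof.
move=> k_le; rewrite adj_mx_compl // !big_cons big_nil mulr1 -!mulmxE.
have size_T : #|T|%:R = m%:R + k%:R :> algC by rewrite -natrD subnK.
rewrite !(mulmxBl, mulmxBr) const_mx1_sqr adj_mx_mul_const_mx1 const_mx1_mul_adj_mx.
rewrite adj_mx_sqr.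
rewrite !(mul_scalar_mx, mul_mx_scalar).
apply/matrixP => i j; rewrite !mxE size_T.
by case: (i == j); rewrite ?mulr1n ?mulr0n; ring.
Qed.

Lemma regular_deg_lt_card : (0 < #|T|)%N -> (k < #|T|)%N.
Proof.
case/card_gt0P => x _; rewrite -subn_gt0 -(card_nonadj (e_reg x)).
by apply/card_gt0P; exists x; rewrite inE e_irr.
Qed.

Lemma energy_complete_multipartite : (0 < #|T|)%N -> energy e = (2 * k)%:R.
Proof.
move=> T_gt0; have k_lt := regular_deg_lt_card T_gt0.
have size_T : #|T|%:R = m%:R + k%:R :> algC by rewrite -natrD subnK // ltnW.
have T_neq0 : #|T|%:R != 0 :> algC by rewrite pnatr_eq0 -lt0n.
apply: (mulfI T_neq0).
rewrite (energy_trace_identity (a0 := 0) (a1 := m%:R - k%:R) (a2 := 2) e_sym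
           adj_mx_cubic_eq0).
  rewrite mxtrace_adj_mx // expr2 -mulmxE adj_mx_sqr linearB !linearZ /=.
  by rewrite mxtrace_const_mx1 mxtrace_adj_mx // natrM; ring.
move=> z; rewrite !inE => /or3P [] /eqP ->; rewrite ?normr0 ?normrN ?normr_nat size_T; ring.
Qed.

Lemma energy_compl_complete_multipartite : (0 < #|T|)%N ->
  m%:R * energy (compl_graph e) = 2 * #|T|%:R * (m%:R - 1).
Proof.
move=> T_gt0; have k_lt := regular_deg_lt_card T_gt0.
have compl_sym := compl_graph_sym e_sym.
rewrite (energy_trace_identity (a0 := 2 * m%:R - 2) (a1 := m%:R - 2) (a2 := 0) compl_sym
           (compl_adj_mx_quadratic_eq0 (ltnW k_lt))).
  by rewrite mxtrace_adj_mx; [ring | exact: compl_graph_irr].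
have m_ge1 : 1 <= m%:R :> algC by rewrite ler1n subn_gt0.
move=> z; rewrite !inE => /orP [] /eqP ->; last by rewrite normrN normr1; ring.
by rewrite ger0_norm ?subr_ge0 //; ring.
Qed.

Lemma energy_compl_eq_iff : (0 < #|T|)%N ->
  energy e = energy (compl_graph e) <-> k = (m * m - m)%N.
Proof.
move=> T_gt0; have k_lt := regular_deg_lt_card T_gt0.
have m_gt0 : (0 < m)%N by rewrite subn_gt0.
have m_neq0 : m%:R != 0 :> algC by rewrite pnatr_eq0 -lt0n.
have size_T : #|T|%:R = m%:R + k%:R :> algC by rewrite -natrD subnK // ltnW.
have energy_diff : m%:R * (energy e - energy (compl_graph e)) = 2 * (k%:R - (m * m - m)%:R).
  rewrite mulrBr energy_compl_complete_multipartite // energy_complete_multipartite //.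
  by rewrite (natrB _ (leq_pmulr _ m_gt0)) !natrM size_T; ring.
split => [energy_eq | k_eq].
  move: energy_diff; rewrite energy_eq subrr mulr0 => /esym/eqP.
  by rewrite mulf_eq0 pnatr_eq0 /= subr_eq0 eqr_nat => /eqP.
apply/eqP; rewrite -subr_eq0; move: energy_diff; rewrite -k_eq subrr mulr0 => /eqP.
by rewrite mulf_eq0 (negbTE m_neq0).
Qed.

End CompleteMultipartite.

Lemma compl_disconnected_cover (T : finType) (e : rel T) :
  symmetric e -> ~ connected_graph (compl_graph e) ->
  exists u v, e u v /\ forall w, e u w || e v w.
Proof.
move=> e_sym not_conn.
have /forallPn [u /forallPn [v not_uv]] :
    ~~ [forall u, [forall v, connect (compl_graph e) u v]].
  by apply/negP => /forallP conn; apply: not_conn => u v; exact: (forallP (conn u) v).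
have compl_edge x y : x != y -> ~~ e x y -> connect (compl_graph e) x y.
  by move=> xy nexy; apply: connect1; rewrite /compl_graph /= xy.
have uv : u != v by apply: contraNneq not_uv => ->; rewrite connect0.
have e_uv : e u v by apply/negPn/negP => neuv; move/negP: not_uv; apply; apply: compl_edge.
exists u, v; split => // w; apply/negPn/negP; rewrite negb_or => /andP [neuw nevw].
have uw : u != w by apply: contraNneq nevw => <-; rewrite e_sym.
have wv : w != v by apply: contraNneq neuw => ->.
move/negP: not_uv; apply; apply: (connect_trans (compl_edge _ _ uw neuw)).
by apply: compl_edge wv _; rewrite e_sym.
Qed.

Lemma srg_imprimitive_complete_multipartite (T : finType) (e : rel T) :
  strongly_regular e -> connected_graph e -> imprimitive_graph e ->
  complete_multipartite e.
Proof.
move=> [[e_sym _] [k [l [mu [e_reg _ _ e_lambda _]]]]] e_conn e_imprim.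
have [|u [v [e_uv cover_uv]]] := compl_disconnected_cover e_sym.
  by move=> compl_conn; apply: e_imprim.
have card_union x z : e x z -> (#|[set w | e x w] :|: [set w | e z w]| + l = k + k)%N.
  move=> e_xz; rewrite -(e_lambda x z e_xz) -{1}(e_reg x) -(e_reg z) -cardsUI.
  by congr (_ + _)%N; apply: eq_card => w; rewrite !inE.
have cover x z : e x z -> forall w, e x w || e z w.
  move=> e_xz w; suff /eqP/setP/(_ w) : [set w | e x w] :|: [set w | e z w] == setT.
    by rewrite !inE.
  rewrite eqEcard subsetT /=; have := card_union x z e_xz.
  rewrite -(card_union u v e_uv) => /addIn ->.
  by apply/subset_leq_card/subsetP => y _; rewrite !inE cover_uv.
move=> x y z nexy neyz; apply/negP => e_xz.
by have := cover x z e_xz y; rewrite (negbTE nexy) e_sym (negbTE neyz).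
Qed.

Section CompleteMultipartiteIso.

Variables (T : finType) (e : rel T) (m : nat).
Hypotheses (e_sym : symmetric e) (e_irr : irreflexive e) (e_mp : complete_multipartite e).
Hypothesis card_nonadj_m : forall x, #|[set y | ~~ e x y]| = m.

Let nonadj x y := ~~ e x y.
Let part x := [set y in [set: T] | nonadj x y].
Let parts := equivalence_partition nonadj [set: T].

Let nonadj_equiv : {in [set: T] & &, equivalence_rel nonadj}.
Proof.
move=> x y z _ _ _; split; first by rewrite /nonadj e_irr.
move=> nexy; apply/idP/idP; last exact: e_mp.
by apply: e_mp; rewrite /nonadj e_sym.
Qed.

Let in_part x : x \in part x.
Proof. by rewrite !inE /nonadj e_irr. Qed.

Let part_eq x y : (part x == part y) = ~~ e x y.
Proof.
apply/eqP/idP => [part_xy | nexy]; first by move: (in_part y); rewrite -part_xy !inE.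
apply/setP => z; rewrite !inE /nonadj; apply/idP/idP; last exact: e_mp.
by apply: e_mp; rewrite e_sym.
Qed.

Let card_part x : #|part x| = m.
Proof. by rewrite -(card_nonadj_m x); apply: eq_card => y; rewrite !inE. Qed.

Let card_parts : #|T| = (m * m)%N -> (0 < m)%N -> #|parts| = m.
Proof.
move=> card_T m_gt0.
have uniform : {in parts, forall A : {set T}, #|A| = m}.
  by move=> _ /imsetP [x _ ->]; apply: card_part.
have := card_uniform_partition uniform (equivalence_partitionP nonadj_equiv).
by rewrite cardsT card_T => /eqP; rewrite eqn_pmul2r // => /eqP <-.
Qed.

Lemma complete_multipartite_iso :
  #|T| = (m * m)%N -> (0 < m)%N -> graph_iso e (Kmulti m m).
Proof.
move=> card_T m_gt0.
have index_part x : (index (part x) (enum parts) < m)%N.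
  by rewrite -(card_parts card_T m_gt0) cardE index_mem mem_enum imset_f ?inE.
have index_in_part x : (index x (enum (part x)) < m)%N.
  by rewrite -(card_part x) cardE index_mem mem_enum.
pose f x : 'I_m * 'I_m := (Ordinal (index_part x), Ordinal (index_in_part x)).
have f1_eq x y : ((f x).1 == (f y).1) = ~~ e x y.
  rewrite -part_eq -val_eqE /=; apply/eqP/eqP => [|-> //].
  by move/(index_inj (part x)); apply; rewrite mem_enum imset_f ?inE.
have f_inj : injective f.
  move=> x y /[dup] fxy /(congr1 (fun p => val p.2)) /=.
  have /eqP part_xy : part x == part y by rewrite part_eq -f1_eq fxy.
  rewrite part_xy => /(index_inj x); apply; rewrite mem_enum ?in_part //.
  by rewrite -part_xy in_part.
exists f; split; first by apply: inj_card_bij f_inj _; rewrite card_prod !card_ord card_T.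
by move=> x y; rewrite /Kmulti /= f1_eq negbK.
Qed.

End CompleteMultipartiteIso.

Lemma graph_iso_card (T T' : finType) (e : rel T) (e' : rel T') :
  graph_iso e e' -> #|T| = #|T'|.
Proof. by case=> f [f_bij _]; apply: bij_eq_card f_bij. Qed.

Lemma graph_iso_regular (T T' : finType) (e : rel T) (e' : rel T') k :
  graph_iso e e' -> (forall x', #|[set y' | e' x' y']| = k) ->
  forall x, #|[set y | e x y]| = k.
Proof.
case=> f [f_bij f_edge] e'_reg x; rewrite -(e'_reg (f x)) -(card_imset _ (bij_inj f_bij)).
apply: eq_card => y'; have [g fK gK] := f_bij.
rewrite inE; apply/imsetP/idP => [[y] | e'_xy].
  by rewrite inE => + ->; rewrite f_edge.
by exists (g y'); rewrite ?inE ?f_edge gK.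
Qed.

Lemma Kmulti_sym a m : symmetric (Kmulti a m).
Proof. by move=> x y; rewrite /Kmulti /= eq_sym. Qed.

Lemma Kmulti_irr a m : irreflexive (Kmulti a m).
Proof. by move=> x; rewrite /Kmulti /= eqxx. Qed.

Lemma Kmulti_complete_multipartite a m : complete_multipartite (Kmulti a m).
Proof. by move=> x y z; rewrite /Kmulti /= !negbK => /eqP ->. Qed.

Lemma Kmulti_regular a m x : #|[set y | Kmulti a m x y]| = (a * m - m)%N.
Proof.
have -> : [set y | Kmulti a m x y] = ~: setX [set x.1] setT.
  by apply/setP => y; rewrite !inE /= eq_sym andbT.
by rewrite cardsCs setCK cardsX cards1 cardsT card_prod !card_ord mul1n.
Qed.

Lemma energy_Kmulti m : (0 < m)%N -> energy (Kmulti m m) = (2 * (m - 1) * m)%:R.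
Proof.
move=> m_gt0; rewrite (energy_complete_multipartite (@Kmulti_sym m m) (@Kmulti_irr m m)
  (@Kmulti_complete_multipartite m m) (@Kmulti_regular m m)).
  by rewrite -mulnA mulnBl mul1n.
by apply/card_gt0P; exists (Ordinal m_gt0, Ordinal m_gt0).
Qed.

Lemma four_dvd_double_pronic m : (4 %| 2 * (m - 1) * m)%N.
Proof.
case: m => // m; rewrite subSS subn0 -mulnA (_ : 4 = 2 * 2)%N // dvdn_pmul2l //.
by rewrite dvdn2 oddM /=; case: (odd m).
Qed.

Theorem mainTheorem6 (T : finType) (e : rel T) :
  strongly_regular e -> connected_graph e -> imprimitive_graph e ->
  (energy e = energy (compl_graph e) <->
     exists m : nat, (1 < m)%N /\ graph_iso e (Kmulti m m))
  /\ (forall m : nat, (1 < m)%N ->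
        energy (Kmulti m m) = (2 * (m - 1) * m)%:R
        /\ (4 %| 2 * (m - 1) * m)%N).
Proof.
move=> srg e_conn e_imprim.
have e_mp := srg_imprimitive_complete_multipartite srg e_conn e_imprim.
split; last by move=> m m_gt1; rewrite energy_Kmulti ?four_dvd_double_pronic // ltnW.
case: srg => [[e_sym e_irr] [k [l [mu [e_reg _ [x [y e_xy]] _ _]]]]].
have T_gt0 : (0 < #|T|)%N by apply/card_gt0P; exists x.
have k_gt0 : (0 < k)%N by rewrite -(e_reg x); apply/card_gt0P; exists y; rewrite inE.
have k_lt := regular_deg_lt_card e_irr e_reg T_gt0.
rewrite (energy_compl_eq_iff e_sym e_irr e_mp e_reg T_gt0).
split => [k_eq | [m [m_gt1 iso]]].
  exists (#|T| - k)%N; split; first by move: k_eq; nia.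
  apply: complete_multipartite_iso e_sym e_irr e_mp _ _ _; last by lia.
    by move=> z; apply: card_nonadj.
  by move: k_eq; nia.
have := graph_iso_card iso; rewrite card_prod !card_ord => card_T.
have k_eq : k = (m * m - m)%N.
  by rewrite -(e_reg x) (graph_iso_regular iso (@Kmulti_regular m m)).
by rewrite card_T k_eq subKn ?leq_pmulr // ltnW.
Qed.
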